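(* Let $G$ be a non-chordal bridged graph of diameter two, and let $C$ be an induced cycle of length $k\ge 6$ in $G$ of minimum length among all induced cycles of length greater than three. Then there exists a vertex $x\notin C$ adjacent to every vertex of $C$, so that $C\cup\{x\}$ induces a $k$-wheel.
   Context: $G$ is bridged if it contains no isometric cycle (a cycle whose distances equal distances in $G$) of length greater than three; in particular a bridged graph has no induced cycles of length 4 or 5. A graph is chordal if it has no induced cycle of length greater than three. A $k$-wheel is a $k$-cycle together with one extra vertex adjacent to all vertices of the cycle. *)

From Stdlib Require Import Arith Lia.

Definition simple_graph {T : Type} (adj : T -> T -> Prop) : Prop :=
  (forall x y, adj x y -> adj y x) /\ (forall x, ~ adj x x).

Definition walk {T : Type} (adj : T -> T -> Prop) (x y : T) (n : nat) : Prop :=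
  exists p : nat -> T, p 0 = x /\ p n = y /\ forall i, i < n -> adj (p i) (p (S i)).

Definition dist_le {T : Type} (adj : T -> T -> Prop) (x y : T) (n : nat) : Prop :=
  exists m, m <= n /\ walk adj x y m.

Definition diameter_two {T : Type} (adj : T -> T -> Prop) : Prop :=
  (forall x y, dist_le adj x y 2) /\ (exists x y, ~ dist_le adj x y 1).

Definition cyc_dist (k i j : nat) : nat :=
  let d := (j - i) + (i - j) in Nat.min d (k - d).

Definition is_cycle {T : Type} (adj : T -> T -> Prop) (k : nat) (c : nat -> T) : Prop :=
  3 <= k /\
  (forall i j, i < k -> j < k -> c i = c j -> i = j) /\
  (forall i, i < k -> adj (c i) (c ((S i) mod k))).

Definition induced_cycle {T : Type} (adj : T -> T -> Prop) (k : nat) (c : nat -> T) : Prop :=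
  is_cycle adj k c /\
  (forall i j, i < k -> j < k -> adj (c i) (c j) -> cyc_dist k i j = 1).

Definition isometric_cycle {T : Type} (adj : T -> T -> Prop) (k : nat) (c : nat -> T) : Prop :=
  is_cycle adj k c /\
  (forall i j n, i < k -> j < k -> (dist_le adj (c i) (c j) n <-> cyc_dist k i j <= n)).

Definition bridged {T : Type} (adj : T -> T -> Prop) : Prop :=
  forall k c, 3 < k -> ~ isometric_cycle adj k c.

Definition chordal {T : Type} (adj : T -> T -> Prop) : Prop :=
  forall k c, 3 < k -> ~ induced_cycle adj k c.

From Stdlib Require Import Arith Lia Classical.

(* Since C is induced and k >= 6, the vertices c 0 and c 3 are
   distinct and non-adjacent, so by diameter two they have a common neighbour x,
   and x lies outside C.  Now look at the neighbourhood of x along C: whenever x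
   sees c a and c b but none of the vertices strictly between them on the arc
   from c a to c b, the vertex x together with that arc is an induced cycle of
   length b - a + 2, hence of length at least k by minimality of C.  So along
   any arc shorter than k - 2 steps whose ends are seen by x, x sees every
   vertex.  The arcs from c 0 to c 3 and from c 3 back to c 0 are such arcs,
   and together they cover C, so x is adjacent to all of C. *)

Lemma common_neighbour {T : Type} (adj : T -> T -> Prop) (u v : T) :
  diameter_two adj -> u <> v -> ~ adj u v -> exists x, adj u x /\ adj x v.
Proof.
  intros [Hd _] Huv Hnadj.
  destruct (Hd u v) as [m [Hm [p [Hp0 [Hpm Hstep]]]]].
  destruct m as [|[|[|m]]]; try lia.
  - subst; contradiction.
  - specialize (Hstep 0 ltac:(lia)); subst; contradiction.
  - exists (p 1). split.
    + rewrite <- Hp0. apply Hstep; lia.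
    + rewrite <- Hpm. apply Hstep; lia.
Qed.

Lemma mod_upto (k i : nat) :
  0 < k -> i <= k -> (i mod k = i /\ i < k) \/ (i = k /\ i mod k = 0).
Proof.
  intros Hk Hi. destruct (Nat.eq_dec i k) as [->|Hne].
  - right. split; [reflexivity|]. apply Nat.Div0.mod_same; lia.
  - left. split; [apply Nat.mod_small|]; lia.
Qed.

Section InducedCycles.
Variable T : Type.
Variable adj : T -> T -> Prop.
Hypothesis Hg : simple_graph adj.

Definition induced_path (n : nat) (v : nat -> T) : Prop :=
  (forall i j, i <= n -> j <= n -> v i = v j -> i = j) /\
  (forall i, i < n -> adj (v i) (v (S i))) /\
  (forall i j, i <= n -> j <= n -> adj (v i) (v j) -> i = S j \/ j = S i).

Lemma close_induced_path (n : nat) (v : nat -> T) (x : T) :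
  2 <= n -> induced_path n v ->
  (forall i, i <= n -> x <> v i) ->
  adj x (v 0) -> adj x (v n) -> (forall i, 0 < i < n -> ~ adj x (v i)) ->
  induced_cycle adj (n + 2) (fun i => if i =? 0 then x else v (i - 1)).
Proof.
  intros Hn [Hinj [Hstep Hchord]] Hout H0 Hend Hmid.
  destruct Hg as [Hsym Hirr].
  assert (Hends : forall i, i <= n -> adj x (v i) -> i = 0 \/ i = n).
  { intros i Hi Ha.
    destruct (Nat.eq_dec i 0); [auto|]; destruct (Nat.eq_dec i n); [auto|].
    exfalso; apply (Hmid i); [lia | exact Ha]. }
  split; [split; [lia | split] |].
  - intros i j Hi Hj.
    destruct (Nat.eqb_spec i 0), (Nat.eqb_spec j 0); intro E.
    + lia.
    + exfalso; apply (Hout (j - 1)); [lia | exact E].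
    + exfalso; apply (Hout (i - 1)); [lia | symmetry; exact E].
    + apply Hinj in E; lia.
  - intros i Hi. destruct (Nat.eq_dec i (n + 1)) as [->|Hne].
    + replace (S (n + 1)) with (n + 2) by lia. rewrite Nat.Div0.mod_same by lia.
      simpl. apply Hsym. replace (n + 1 =? 0) with false by (symmetry; apply Nat.eqb_neq; lia).
      replace (n + 1 - 1) with n by lia. exact Hend.
    + rewrite Nat.mod_small by lia.
      destruct (Nat.eqb_spec i 0) as [->|Hi0]; simpl; [exact H0|].
      destruct (Nat.eqb_spec i 0); [lia|].
      replace (i - 0) with (S (i - 1)) by lia. apply Hstep; lia.
  - intros i j Hi Hj.
    destruct (Nat.eqb_spec i 0), (Nat.eqb_spec j 0); intro Ha; subst.
    + exfalso; exact (Hirr x Ha).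
    + apply Hends in Ha; [|lia]. unfold cyc_dist; lia.
    + apply Hsym, Hends in Ha; [|lia]. unfold cyc_dist; lia.
    + apply Hchord in Ha; [|lia|lia]. unfold cyc_dist; lia.
Qed.

Variable k : nat.
Variable c : nat -> T.
Hypothesis Hc : induced_cycle adj k c.

Lemma cycle_chordless (p q : nat) :
  p < k -> q < k -> adj (c p) (c q) -> (p - q) + (q - p) = 1 \/ (p - q) + (q - p) = k - 1.
Proof.
  intros Hp Hq Ha. destruct Hc as [_ Hchord].
  specialize (Hchord p q Hp Hq Ha). unfold cyc_dist in Hchord. lia.
Qed.

(* An arc c a, ..., c b of an induced cycle (read modulo k, so it may end at
   c k = c 0) that leaves out at least one vertex is an induced path. *)
Lemma cycle_arc_induced (a b : nat) :
  a <= b <= k -> b - a + 2 <= k -> induced_path (b - a) (fun i => c ((a + i) mod k)).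
Proof.
  intros Hab Hlen. pose proof Hc as [[Hk [Hinj Hstep]] _].
  assert (Hbound : forall i, (a + i) mod k < k) by (intro; apply Nat.mod_upper_bound; lia).
  split; [| split].
  - intros i j Hi Hj E. apply Hinj in E; [|apply Hbound|apply Hbound].
    destruct (mod_upto k (a + i)), (mod_upto k (a + j)); lia.
  - intros i Hi. rewrite (Nat.mod_small (a + i)) by lia.
    replace (a + S i) with (S (a + i)) by lia. apply Hstep; lia.
  - intros i j Hi Hj Ha. apply cycle_chordless in Ha; [|apply Hbound|apply Hbound].
    destruct (mod_upto k (a + i)), (mod_upto k (a + j)); lia.
Qed.

Hypothesis Hmin : forall k' c', 3 < k' -> induced_cycle adj k' c' -> k <= k'.
Variable x : T.
Hypothesis Hx_out : forall i, i < k -> x <> c i.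

(* If x sees the ends of an arc with at least two edges but nothing strictly
   inside it, x and the arc form an induced cycle, so by minimality of C the
   arc has length at least k - 2. *)
Lemma neighbourhood_gap (a b : nat) :
  a + 2 <= b <= k -> b - a + 2 <= k ->
  adj x (c (a mod k)) -> adj x (c (b mod k)) ->
  (forall t, a < t < b -> ~ adj x (c (t mod k))) -> k <= b - a + 2.
Proof.
  intros Hab Hlen Ha Hb Hgap.
  apply (Hmin _ (fun i => if i =? 0 then x else c ((a + (i - 1)) mod k))); [lia|].
  apply (close_induced_path (b - a) (fun i => c ((a + i) mod k)) x).
  - lia.
  - apply cycle_arc_induced; lia.
  - intros i _. apply Hx_out, Nat.mod_upper_bound; lia.
  - rewrite Nat.add_0_r. exact Ha.
  - replace (a + (b - a)) with b by lia. exact Hb.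
  - intros i Hi. apply Hgap. lia.
Qed.

(* Along an arc of at most k - 3 edges whose two ends are seen by x, the
   vertex x sees every vertex: split the arc at an inner neighbour of x, and
   if there is none the arc is a gap, too short by the previous lemma. *)
Lemma neighbourhood_fills_arc (a b : nat) :
  a <= b <= k -> b - a + 3 <= k ->
  adj x (c (a mod k)) -> adj x (c (b mod k)) ->
  forall j, a <= j <= b -> adj x (c (j mod k)).
Proof.
  remember (b - a) as d eqn:Hd. revert a b Hd.
  induction d as [d IH] using lt_wf_ind.
  intros a b Hd Hab Hlen Ha Hb j Hj.
  destruct (classic (exists t, a < t < b /\ adj x (c (t mod k))))
    as [[t [Ht Hxt]] | Hnone].
  - destruct (Nat.le_gt_cases j t).
    + apply (IH (t - a)) with (a := a) (b := t); auto; lia.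
    + apply (IH (b - t)) with (a := t) (b := b); auto; lia.
  - destruct (Nat.eq_dec j a) as [->|]; [exact Ha|].
    destruct (Nat.eq_dec j b) as [->|]; [exact Hb|].
    exfalso.
    assert (k <= b - a + 2); [|lia].
    apply neighbourhood_gap; try lia; [exact Ha | exact Hb |].
    intros t Ht Hxt. apply Hnone. eauto.
Qed.

End InducedCycles.

Theorem mainTheorem13 (T : Type) (adj : T -> T -> Prop)
  (Hg : simple_graph adj) (Hbr : bridged adj) (Hnc : ~ chordal adj)
  (Hdiam : diameter_two adj)
  (k : nat) (c : nat -> T) (Hc : induced_cycle adj k c) (Hk : 6 <= k)
  (Hmin : forall k' c', 3 < k' -> induced_cycle adj k' c' -> k <= k') :
  exists x : T, (forall i, i < k -> x <> c i) /\ (forall i, i < k -> adj x (c i)).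
Proof.
  pose proof Hc as [[_ [Hinj _]] _].
  pose proof (cycle_chordless T adj k c Hc) as Hchordless.
  (* c 0 and c 3 are at distance three on C, hence have a common neighbour x *)
  destruct (common_neighbour adj (c 0) (c 3)) as [x [H0x Hx3]]; auto.
  { intro E. apply Hinj in E; lia. }
  { intro Ha. apply Hchordless in Ha; lia. }
  assert (Hx0 : adj x (c 0)) by (apply Hg; exact H0x).
  (* x is off C: no vertex of C is a cyclic neighbour of both c 0 and c 3 *)
  assert (Hout : forall i, i < k -> x <> c i).
  { intros i Hi ->. apply Hchordless in Hx0; [|lia|lia].
    apply Hchordless in Hx3; lia. }
  exists x. split; [exact Hout|].
  (* the arcs c 0 .. c 3 and c 3 .. c k = c 0 cover C *)
  intros i Hi. rewrite <- (Nat.mod_small i k Hi).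
  destruct (Nat.le_gt_cases i 3).
  - apply (neighbourhood_fills_arc T adj Hg k c Hc Hmin x Hout 0 3); try lia;
      rewrite Nat.mod_small by lia; assumption.
  - apply (neighbourhood_fills_arc T adj Hg k c Hc Hmin x Hout 3 k); try lia.
    + rewrite Nat.mod_small by lia; assumption.
    + rewrite Nat.Div0.mod_same by lia; assumption.
Qed.
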